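(* Let $(H,k,\chi)$ be an instance of Precoloring Extension with $H=(V,F)$, $V=\{1,\dots,n\}$, $H$ having at least one edge. Construct a $P_n\,|\,\mathrm{conc}\,|\,C_{\max}$ instance as follows: jobs $1,\dots,n$ with $p_j=1$ and conflict graph initially $G=H$; jobs $a,b$ with $p_a=p_b=1$ and jobs $a',b'$ with $p_{a'}=p_{b'}=k-1$, with conflict edges $\{a,a'\},\{b,b'\},\{a,b\}$; for each $j\in V_0$ with $\chi(j)\in\{2,\dots,k-1\}$, jobs $j(1),j(2)$ with $p_{j(1)}=\chi(j)-1$, $p_{j(2)}=k-\chi(j)$ and conflict edges $\{j,j(1)\},\{j,j(2)\},\{j(1),j(2)\},\{a,j\},\{b,j\},\{a,j(2)\},\{b,j(1)\}$; for each $j\in V_0$ with $\chi(j)=1$, a job $j(2)$ with $p_{j(2)}=k-1$ and conflict edges $\{j,j(2)\},\{b,j\},\{a,j(2)\}$; for each $j\in V_0$ with $\chi(j)=k$, a job $j(1)$ with $p_{j(1)}=k-1$ and conflict edges $\{j,j(1)\},\{a,j\},\{b,j(1)\}$. If the constructed instance has a feasible schedule $C$ with $C_{\max}\le k$, then $(H,k,\chi)$ has a solution $\chi':\{1,\dots,n\}\to\{1,\dots,k\}$.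
   Context: Precoloring Extension: given a graph $H=(V,F)$, an integer $k$, and a proper coloring $\chi:V_0\to\{1,\dots,k\}$ of $H[V_0]$ for some $V_0\subseteq V$, a solution is a proper coloring $\chi':V\to\{1,\dots,k\}$ of $H$ with $\chi'(v)=\chi(v)$ for all $v\in V_0$. In $P_n\,|\,\mathrm{conc}\,|\,C_{\max}$, each job $j$ has integer processing time $p_j\ge1$ and release time $0$, and there is a conflict graph $G$; a schedule $C$ assigning each job a completion time $C_j\in\mathbb{N}$ is feasible if $C_j-p_j\ge0$ for all $j$ and $[C_i-p_i,C_i)\cap[C_j-p_j,C_j)=\emptyset$ for all edges $\{i,j\}$ of $G$; $C_{\max}=\max_j C_j$. *)

From mathcomp Require Import all_boot.
Set Implicit Arguments. Unset Strict Implicit. Unset Printing Implicit Defensive.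

(* Vertices 1..n are represented by 'I_n; a simple graph is a symmetric,
   irreflexive relation. Colours are natural numbers in {1,...,k}. *)
Definition simple_graph (n : nat) (H : rel 'I_n) : Prop :=
  (forall u v, H u v = H v u) /\ (forall v, ~~ H v v).

Definition has_edge (n : nat) (H : rel 'I_n) : Prop := exists u v, H u v.

Definition pce_instance (n : nat) (H : rel 'I_n) (k : nat) (V0 : {set 'I_n})
    (chi : 'I_n -> nat) : Prop :=
  (forall v, v \in V0 -> 1 <= chi v <= k) /\
  (forall u v, u \in V0 -> v \in V0 -> H u v -> chi u != chi v).

Definition pce_solution (n : nat) (H : rel 'I_n) (k : nat) (V0 : {set 'I_n})
    (chi chi' : 'I_n -> nat) : Prop :=
  (forall v, 1 <= chi' v <= k) /\
  (forall u v, H u v -> chi' u != chi' v) /\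
  (forall v, v \in V0 -> chi' v = chi v).

Inductive job (n : nat) : Type :=
| JV of 'I_n
| Ja | Jb
| Ja' | Jb'
| J1 of 'I_n
| J2 of 'I_n.
Arguments Ja {n}. Arguments Jb {n}. Arguments Ja' {n}. Arguments Jb' {n}.

Section Construction.
Variables (n : nat) (H : rel 'I_n) (k : nat) (V0 : {set 'I_n}) (chi : 'I_n -> nat).

Definition mid (j : 'I_n) : bool := (j \in V0) && (2 <= chi j <= k - 1).
Definition one (j : 'I_n) : bool := (j \in V0) && (chi j == 1).
Definition top (j : 'I_n) : bool := (j \in V0) && (chi j == k).

Definition job_exists (x : job n) : bool :=
  match x with
  | J1 j => mid j || top j
  | J2 j => mid j || one j
  | _ => true
  end.

(* processing times: for j(1), chi(j)-1 (= k-1 when chi(j)=k);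
   for j(2), k-chi(j) (= k-1 when chi(j)=1) *)
Definition ptime (x : job n) : nat :=
  match x with
  | JV _ | Ja | Jb => 1
  | Ja' | Jb' => k - 1
  | J1 j => chi j - 1
  | J2 j => k - chi j
  end.

Definition edge0 (x y : job n) : bool :=
  match x, y with
  | JV i, JV j => H i j
  | Ja, Ja' => true
  | Jb, Jb' => true
  | Ja, Jb => true
  | JV j, J1 j' => (j == j') && (mid j || top j)
  | JV j, J2 j' => (j == j') && (mid j || one j)
  | J1 j, J2 j' => (j == j') && mid j
  | Ja, JV j => mid j || top j
  | Jb, JV j => mid j || one j
  | Ja, J2 j => mid j || one j
  | Jb, J1 j => mid j || top j
  | _, _ => false
  end.

Definition conflict (x y : job n) : bool := edge0 x y || edge0 y x.

(* [C_x - p_x, C_x) and [C_y - p_y, C_y) are disjoint (integer endpoints) *)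
Definition disjoint_intervals (s1 e1 s2 e2 : nat) : Prop :=
  ~ exists t : nat, (s1 <= t < e1) && (s2 <= t < e2).

Definition feasible_schedule (C : job n -> nat) : Prop :=
  (forall x, job_exists x -> ptime x <= C x) /\
  (forall x y, job_exists x -> job_exists y -> conflict x y ->
     disjoint_intervals (C x - ptime x) (C x) (C y - ptime y) (C y)).

Definition cmax_le (C : job n -> nat) (T : nat) : Prop :=
  forall x, job_exists x -> C x <= T.

End Construction.

(* Since a and b conflict with each other and with the jobs a', b' of length
   k - 1, in a schedule of length k they occupy the first and the last slot;
   mirroring the schedule in time we may assume a runs first.  Then the slot
   C_j of each vertex job is a proper colouring of H.  A precoloured vertex j
   with chi(j) = c is pinned to slot c: j, j(1) and j(2) are pairwise in
   conflict and have total length k, so they tile [0, k), and the conflicts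
   with a and b force the order j(1), j, j(2). *)
From Pilot Require Import Defs.
From mathcomp Require Import all_boot.
From mathcomp Require Import zify.

Set Implicit Arguments.
Unset Strict Implicit.

Lemma disjoint_intervals_sep s1 e1 s2 e2 : s1 < e1 -> s2 < e2 ->
  disjoint_intervals s1 e1 s2 e2 -> e1 <= s2 \/ e2 <= s1.
Proof.
move=> lt1 lt2 disj; case: (leqP e1 s2) => [|?]; first by left.
case: (leqP e2 s1) => [|?]; first by right.
by case: disj; exists (maxn s1 s2); apply/andP; split; apply/andP; split; lia.
Qed.

Lemma disjoint_intervals_mirror T s1 e1 s2 e2 : e1 <= T -> e2 <= T ->
  disjoint_intervals s1 e1 s2 e2 ->
  disjoint_intervals (T - e1) (T - s1) (T - e2) (T - s2).
Proof.
move=> le1 le2 disj [t /andP[/andP[? ?] /andP[? ?]]].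
by apply: disj; exists (T.-1 - t); apply/andP; split; apply/andP; split; lia.
Qed.

Section Schedule.
Variables (n : nat) (H : rel 'I_n) (k : nat) (V0 : {set 'I_n}) (chi : 'I_n -> nat).

Local Notation job_exists := (job_exists k V0 chi).
Local Notation ptime := (ptime k chi).
Local Notation conflict := (conflict H k V0 chi).
Local Notation feasible := (feasible_schedule H k V0 chi).
Local Notation cmax_le := (cmax_le k V0 chi).

Definition mirror_schedule (C : job n -> nat) (x : job n) : nat :=
  k + ptime x - C x.

Lemma mirror_schedule_feasible C :
  feasible C -> cmax_le C k ->
  feasible (mirror_schedule C) /\ cmax_le (mirror_schedule C) k.
Proof.
rewrite /mirror_schedule => -[released disj] short; split; [split|].
- by move=> x ex; have := short x ex; lia.
- move=> x y ex ey cxy.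
  have := released x ex; have := released y ey; have := short x ex; have := short y ey.
  move=> ? ? ? ?; have -> : k + ptime x - C x - ptime x = k - C x by lia.
  have -> : k + ptime y - C y - ptime y = k - C y by lia.
  have -> : k + ptime x - C x = k - (C x - ptime x) by lia.
  have -> : k + ptime y - C y = k - (C y - ptime y) by lia.
  exact: disjoint_intervals_mirror (disj x y ex ey cxy).
- by move=> x ex; have := released x ex; lia.
Qed.

Section Feasible.
Variable C : job n -> nat.
Hypotheses (feasC : feasible C) (shortC : cmax_le C k).

Lemma schedule_window x : job_exists x -> ptime x <= C x <= k.
Proof. by move=> ex; rewrite feasC.1 ?shortC. Qed.

Lemma schedule_sep x y : job_exists x -> job_exists y -> conflict x y ->
  0 < ptime x -> 0 < ptime y -> C x <= C y - ptime y \/ C y <= C x - ptime x.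
Proof.
move=> ex ey cxy px py; have := schedule_window ex; have := schedule_window ey.
move=> wy wx; have := disjoint_intervals_sep _ _ (feasC.2 x y ex ey cxy); lia.
Qed.

Lemma schedule_k_ge2 : 2 <= k.
Proof.
have := schedule_sep (x := Ja) (y := Jb) erefl erefl erefl erefl erefl.
have := schedule_window (x := Ja) erefl; have := schedule_window (x := Jb) erefl.
rewrite /=; lia.
Qed.

Lemma schedule_ab_ends : (C Ja = 1 /\ C Jb = k) \/ (C Ja = k /\ C Jb = 1).
Proof.
have k2 := schedule_k_ge2; have long : 0 < k - 1 by lia.
have := schedule_sep (x := Ja) (y := Jb) erefl erefl erefl erefl erefl.
have := schedule_sep (x := Ja) (y := Ja') erefl erefl erefl erefl long.
have := schedule_sep (x := Jb) (y := Jb') erefl erefl erefl erefl long.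
have := schedule_window (x := Ja) erefl; have := schedule_window (x := Jb) erefl.
have := schedule_window (x := Ja') erefl; have := schedule_window (x := Jb') erefl.
rewrite /=; lia.
Qed.

End Feasible.

Lemma normalized_schedule C : feasible C -> cmax_le C k ->
  exists2 C', feasible C' /\ cmax_le C' k & C' Ja = 1 /\ C' Jb = k.
Proof.
move=> feasC shortC.
case: (schedule_ab_ends feasC shortC) => [ends|[a_last b_first]]; first by exists C.
exists (mirror_schedule C); first exact: mirror_schedule_feasible.
by rewrite /mirror_schedule /= a_last b_first; lia.
Qed.

Section Normalized.
Variable C : job n -> nat.
Hypotheses (feasC : feasible C) (shortC : cmax_le C k).
Hypotheses (a_first : C Ja = 1) (b_last : C Jb = k).

Local Notation window := (schedule_window feasC shortC).
Local Notation sep := (schedule_sep feasC shortC).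

Lemma vertex_slot_range v : 1 <= C (JV v) <= k.
Proof. exact: (window (x := JV v)). Qed.

Lemma vertex_slot_proper u v : H u v -> C (JV u) != C (JV v).
Proof.
move=> huv; have c_uv : conflict (JV u) (JV v) by rewrite /conflict /= huv.
have := vertex_slot_range u; have := vertex_slot_range v.
by have := sep (x := JV u) (y := JV v) erefl erefl c_uv erefl erefl; rewrite /=; lia.
Qed.

Lemma conflict_a_after x : job_exists x -> conflict Ja x -> 0 < ptime x ->
  ptime x < C x.
Proof.
move=> ex cax px; have := window ex.
by have := sep (x := Ja) erefl ex cax erefl px; rewrite /= a_first; lia.
Qed.

Lemma conflict_b_before x : job_exists x -> conflict Jb x -> 0 < ptime x ->
  C x < k.
Proof.
move=> ex cbx px; have := window ex.
by have := sep (x := Jb) erefl ex cbx erefl px; rewrite /= b_last; lia.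
Qed.

Lemma vertex_slot_one v : Defs.one V0 chi v -> C (JV v) = 1.
Proof.
move=> ov; have /andP[_ /eqP c1] := ov.
have e2 : job_exists (J2 v) by rewrite /= ov orbT.
have p2 : 0 < ptime (J2 v) by have := schedule_k_ge2 feasC shortC; rewrite /= c1; lia.
have c_a2 : conflict Ja (J2 v) by rewrite /conflict /= ov orbT.
have c_bv : conflict Jb (JV v) by rewrite /conflict /= ov orbT.
have c_v2 : conflict (JV v) (J2 v) by rewrite /conflict /= eqxx ov orbT.
have := conflict_a_after e2 c_a2 p2.
have := conflict_b_before (x := JV v) erefl c_bv erefl.
have := sep (x := JV v) erefl e2 c_v2 erefl p2.
have := window e2; have := vertex_slot_range v; rewrite /= c1; lia.
Qed.

Lemma vertex_slot_top v : Defs.top k V0 chi v -> C (JV v) = k.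
Proof.
move=> tv; have /andP[_ /eqP ck] := tv.
have e1 : job_exists (J1 v) by rewrite /= tv orbT.
have p1 : 0 < ptime (J1 v) by have := schedule_k_ge2 feasC shortC; rewrite /= ck; lia.
have c_b1 : conflict Jb (J1 v) by rewrite /conflict /= tv orbT.
have c_av : conflict Ja (JV v) by rewrite /conflict /= tv orbT.
have c_v1 : conflict (JV v) (J1 v) by rewrite /conflict /= eqxx tv orbT.
have := conflict_b_before e1 c_b1 p1.
have := conflict_a_after (x := JV v) erefl c_av erefl.
have := sep (x := JV v) erefl e1 c_v1 erefl p1.
have := window e1; have := vertex_slot_range v; rewrite /= ck; lia.
Qed.

Lemma vertex_slot_mid v : Defs.mid k V0 chi v -> C (JV v) = chi v.
Proof.
move=> mv; have /andP[_ cv] := mv.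
have e1 : job_exists (J1 v) by rewrite /= mv.
have e2 : job_exists (J2 v) by rewrite /= mv.
have p1 : 0 < ptime (J1 v) by rewrite /=; lia.
have p2 : 0 < ptime (J2 v) by rewrite /=; lia.
have c_b1 : conflict Jb (J1 v) by rewrite /conflict /= mv.
have c_a2 : conflict Ja (J2 v) by rewrite /conflict /= mv.
have c_av : conflict Ja (JV v) by rewrite /conflict /= mv.
have c_bv : conflict Jb (JV v) by rewrite /conflict /= mv.
have c_v1 : conflict (JV v) (J1 v) by rewrite /conflict /= eqxx mv.
have c_v2 : conflict (JV v) (J2 v) by rewrite /conflict /= eqxx mv.
have c_12 : conflict (J1 v) (J2 v) by rewrite /conflict /= eqxx mv.
have := conflict_b_before e1 c_b1 p1; have := conflict_a_after e2 c_a2 p2.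
have := conflict_a_after (x := JV v) erefl c_av erefl.
have := conflict_b_before (x := JV v) erefl c_bv erefl.
have := sep (x := JV v) erefl e1 c_v1 erefl p1.
have := sep (x := JV v) erefl e2 c_v2 erefl p2.
have := sep e1 e2 c_12 p1 p2.
have := window e1; have := window e2; rewrite /=; lia.
Qed.

Lemma vertex_slot_precoloured v : 1 <= chi v <= k -> v \in V0 -> C (JV v) = chi v.
Proof.
move=> cv vV.
have [c1|c1] := eqVneq (chi v) 1.
  by rewrite c1; apply: vertex_slot_one; rewrite /Defs.one vV c1.
have [ck|ck] := eqVneq (chi v) k.
  by rewrite ck; apply: vertex_slot_top; rewrite /Defs.top vV ck /=.
by apply: vertex_slot_mid; rewrite /Defs.mid vV; lia.
Qed.

End Normalized.
End Schedule.

Theorem lemma10 (n : nat) (H : rel 'I_n) (k : nat) (V0 : {set 'I_n})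
    (chi : 'I_n -> nat) :
  simple_graph H -> has_edge H -> pce_instance H k V0 chi ->
  (exists C : job n -> nat,
     feasible_schedule H k V0 chi C /\ cmax_le k V0 chi C k) ->
  exists chi' : 'I_n -> nat, pce_solution H k V0 chi chi'.
Proof.
move=> _ _ [chi_range _] [C [feasC shortC]].
have [C' [feasC' shortC'] [a_first b_last]] := normalized_schedule feasC shortC.
exists (fun v => C' (JV v)); split; [|split].
- exact: (vertex_slot_range feasC' shortC').
- exact: (vertex_slot_proper feasC' shortC').
- move=> v vV.
  exact: (vertex_slot_precoloured feasC' shortC' a_first b_last (chi_range v vV) vV).
Qed.
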